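(* Suppose $X$ is a Suslin line. Then $\pi Nt(X)\geq\omega_1$.
   Context: A Suslin line is a linearly ordered set with the order topology that has the countable chain condition (every family of pairwise disjoint nonempty open sets is countable) but is not separable. Families of open sets are ordered by inclusion; a family is $\kappa^{\mathrm{op}}$-like if no member is contained in $\kappa$-many members. $\pi Nt(X)$ is the least $\kappa\geq\omega$ such that $X$ has a $\kappa^{\mathrm{op}}$-like $\pi$-base. *)

From HB Require Import structures.
From mathcomp Require Import all_boot all_order all_algebra.
From mathcomp Require Import all_classical all_reals all_analysis.
Set Implicit Arguments. Unset Strict Implicit. Unset Printing Implicit Defensive.
Import Order.TTheory.
Local Open Scope classical_set_scope.
Local Open Scope card_scope.

Definition separable (X : topologicalType) : Prop :=
  exists D : set X, countable D /\ dense D.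

Definition ccc (X : topologicalType) : Prop :=
  forall F : set (set X),
    (forall U, F U -> open U /\ U !=set0) ->
    (forall U V, F U -> F V -> U <> V -> U `&` V = set0) ->
    countable F.

Definition suslin_line d (X : orderTopologicalType d) : Prop :=
  ccc X /\ ~ separable X.

Definition pi_base (X : topologicalType) (B : set (set X)) : Prop :=
  (forall U, B U -> open U /\ U !=set0) /\
  (forall O, open O -> O !=set0 -> exists2 U, B U & U `<=` O).

(* B is kappa^op-like (kappa the cardinality of K): no member of B is
   contained in kappa-many members of B *)
Definition op_like (X : Type) (I : Type) (K : set I) (B : set (set X)) : Prop :=
  forall U, B U -> ~ (K #<= [set V | B V /\ U `<=` V]).

(* piNt(X) >= omega_1: X has no kappa^op-like pi-base for any infinite
   kappa < omega_1, i.e. for kappa = omega *)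
Definition piNt_ge_omega1 (X : topologicalType) : Prop :=
  forall B : set (set X), pi_base B -> ~ op_like [set: nat] B.

(* Let B be a pi-base in which every member has finitely many supersets in B,
   and call that number the level of a member; two distinct members of the same
   level are never comparable under inclusion. By ccc each level has a countable
   maximal pairwise disjoint subfamily; let C be their union. Each open V also
   has, by ccc, a countable subset E_V such that every interval meeting V but
   not contained in V meets E_V: take countable coinitial and cofinal subsets of
   each of the countably many convex components of V. The union of the E_V for
   V in C is dense: an open interval O missing it contains some U in B, some V
   in C of the level of U meets U, hence O is inside V, so U is inside V,
   U = V, and E_V lies in O. Thus X would be separable. *)

From HB Require Import structures.
From mathcomp Require Import all_boot all_order all_algebra finmap.
From mathcomp Require Import all_classical all_reals all_analysis.
Set Implicit Arguments. Unset Strict Implicit. Unset Printing Implicit Defensive.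
Import Order.TTheory.
Local Open Scope order_scope.
Local Open Scope classical_set_scope.

Lemma countable_setU T (A B : set T) :
  countable A -> countable B -> countable (A `|` B).
Proof.
move=> cA cB.
have : countable (\bigcup_(b in [set: bool]) (if b then A else B)).
  by apply: bigcup_countable => // -[].
apply: sub_countable; apply: subset_card_le => x [Ax|Bx].
  by exists true.
by exists false.
Qed.

Lemma maximal_disjoint_meets I T (F : I -> set T) (D G : set I) i :
  maximal_disjoint_subcollection F D G -> G i -> F i !=set0 ->
  exists2 j, D j & F i `&` F j !=set0.
Proof.
move=> [DG tD maxD] Gi [x Fix]; apply: contrapT => no_meet.
have Di : ~ D i by move=> Di; apply: no_meet; exists i => //; exists x.
apply: (maxD (D `|` [set i])).
- by split=> [j Dj|/(_ i (or_intror erefl))]; [left|].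
- by move=> j [/DG|->].
- move=> j k [Dj|->] [Dk|->] jk //; first exact: tD.
    by exfalso; apply: no_meet; exists j => //; rewrite setIC.
  by exfalso; apply: no_meet; exists k.
Qed.

Lemma ccc_trivIset (X : topologicalType) (F : set (set X)) : ccc X ->
  (forall U, F U -> open U /\ U !=set0) -> trivIset F id -> countable F.
Proof.
move=> hc F_open tF; apply: hc => // U V FU FV UV.
by apply/seteqP; split=> // x [Ux Vx]; apply: UV; apply: tF => //; exists x.
Qed.

(* ccc for open intervals, indexed by their endpoints so that it transfers to
   the dual order. *)
Definition interval_ccc d (T : orderType d) := forall D : set (T * T),
  (forall p, D p -> `]p.1, p.2[ !=set0) ->
  trivIset D (fun p => `]p.1, p.2[) -> countable D.

Lemma trivIset_inj I T (D : set I) (F : I -> set T) :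
  (forall i, D i -> F i !=set0) -> trivIset D F -> {in D &, injective F}.
Proof.
move=> F0 tF i j /set_mem Di /set_mem Dj Fij; apply: tF => //.
by rewrite Fij setIid; exact: F0.
Qed.

Lemma ccc_interval_ccc d (X : orderTopologicalType d) : ccc X -> interval_ccc X.
Proof.
move=> hc D D0 tD; rewrite -(eq_countable (inj_card_eq (trivIset_inj D0 tD))).
apply: ccc_trivIset => [//|_ [p Dp <-]|_ _ [p Dp <-] [q Dq <-] pq].
  by split; [exact: itv_open | exact: D0].
by congr (fun p => `]p.1, p.2[); exact: tD.
Qed.

Lemma dual_itv_oo d (T : orderType d) (a b : T^d) :
  `]a, b[ = `](b : T), (a : T)[ :> set T.
Proof. by apply/seteqP; split => x /=; rewrite !in_itv /= andbC. Qed.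

Lemma interval_ccc_dual d (T : orderType d) : interval_ccc T -> interval_ccc T^d.
Proof.
move=> hc D D0 tD; pose swap (p : T^d * T^d) : T * T := (p.2, p.1).
have swap_inj : {in D &, injective swap} by move=> [? ?] [? ?] _ _ [-> ->].
rewrite -(eq_countable (inj_card_eq swap_inj)); apply: hc.
  by move=> _ [[a b] Dab <-]; rewrite -(dual_itv_oo a b); exact: D0 Dab.
move=> _ _ [[a b] Dab <-] [[a' b'] Dab' <-] /=.
rewrite -(dual_itv_oo a b) -(dual_itv_oo a' b') => meet.
by rewrite (tD _ _ Dab Dab' meet).
Qed.

Lemma interval_ccc_coinitial d (T : orderType d) (A : set T) : interval_ccc T ->
  exists C, [/\ countable C, C `<=` A & forall a, A a -> exists2 c, C c & c <= a].
Proof.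
move=> hc.
have [[m [Am m_min]]|no_min] :=
  pselect (exists m, A m /\ forall a, A a -> m <= a).
  exists [set m]; split=> [|_ -> //|a Aa]; first exact: countable1.
  by exists m; last exact: m_min.
have below x : A x -> exists2 y, A y & y < x.
  move=> Ax; apply: contrapT => no_below; apply: no_min.
  exists x; split=> // a Aa.
  by rewrite leNgt; apply/negP => ax; apply: no_below; exists a.
(* Without a least element, the left ends of a maximal disjoint family of
   intervals with ends in A are coinitial in A. *)
pose G := [set p : T * T | [/\ A p.1, A p.2 & `]p.1, p.2[ !=set0]].
have [D maxD] := ex_maximal_disjoint_subcollection (fun p => `]p.1, p.2[) G.
have [DG tD _] := maxD.
exists (fst @` D); split.
- rewrite (sub_countable (card_image_le _ _)) //.
  by apply: hc tD => p /DG[].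
- by move=> _ [p /DG[Ap _ _] <-].
- move=> a Aa; apply: contrapT => no_c.
  have [a1 A1 a1a] := below a Aa; have [a2 A2 a21] := below a1 A1.
  have [a3 A3 a32] := below a2 A2.
  have a31 : `]a3, a1[ !=set0 by exists a2; rewrite /= in_itv /= a32 a21.
  have [p Dp [t []]] :=
    maximal_disjoint_meets (i := (a3, a1)) maxD (And3 A3 A1 a31) a31.
  rewrite /= !in_itv /= => /andP[_ ta1] /andP[p1t _].
  apply: no_c; exists p.1; first by exists p.
  by rewrite ltW // (lt_trans p1t) // (lt_trans ta1).
Qed.

Lemma interval_ccc_cofinal d (T : orderType d) (A : set T) : interval_ccc T ->
  exists C, [/\ countable C, C `<=` A & forall a, A a -> exists2 c, C c & a <= c].
Proof. by move=> /interval_ccc_dual/(interval_ccc_coinitial (A : set T^d)). Qed.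

Section order_component.
Context {d : Order.disp_t} {T : orderType d}.
Implicit Types (a b c t x y z : T) (V : set T).

Definition between a b t := (a <= t <= b) || (b <= t <= a).

Lemma betweenC a b t : between a b t = between b a t.
Proof. by rewrite /between orbC. Qed.

Lemma between_split a b c t : between a c t -> between a b t \/ between b c t.
Proof.
rewrite /between => /orP[/andP[le_at le_tc]|/andP[le_ct le_ta]].
  have [_|/ltW le_bt] := leP t b; first by left; rewrite le_at.
  by right; rewrite le_bt le_tc.
have [_|/ltW le_bt] := leP t b; first by right; rewrite le_ct orbT.
by left; rewrite le_bt le_ta orbT.
Qed.

Lemma betweenxx a t : between a a t -> t = a.
Proof.
rewrite /between orbb => /andP[le_at le_ta].
by apply/eqP; rewrite eq_le le_at le_ta.
Qed.

Lemma between_r a b : between a b b.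
Proof. by rewrite /between lexx !andbT; exact: le_total. Qed.

Lemma between_itv (i : interval T) a b t :
  a \in i -> b \in i -> between a b t -> t \in i.
Proof.
case: i => l r; rewrite !itv_boundlr => /andP[la ar] /andP[lb br].
case/orP=> /andP[le_at le_tb].
  by rewrite (le_trans la) ?leBSide //= (le_trans _ br) // leBSide.
by rewrite (le_trans lb) ?leBSide //= (le_trans _ ar) // leBSide.
Qed.

Definition order_component V x := [set z | forall t, between x z t -> V t].

Lemma order_component_trans V x y z :
  order_component V x y -> order_component V y z -> order_component V x z.
Proof. by move=> xy yz t /(between_split y) [/xy|/yz]. Qed.

Lemma order_component_sym V x y : order_component V x y -> order_component V y x.
Proof. by move=> xy t; rewrite betweenC => /xy. Qed.

Lemma order_component_refl V x : V x -> order_component V x x.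
Proof. by move=> Vx t /betweenxx ->. Qed.

Lemma order_component_sub V x : order_component V x `<=` V.
Proof. by move=> z xz; apply: xz; exact: between_r. Qed.

Lemma order_component_eq V x y z : order_component V x z ->
  order_component V y z -> order_component V x = order_component V y.
Proof.
move=> xz yz; have zx := order_component_sym xz.
have zy := order_component_sym yz.
apply/seteqP; split=> w.
  exact: order_component_trans (order_component_trans yz zx).
exact: order_component_trans (order_component_trans xz zy).
Qed.

End order_component.

Lemma open_order_component d (X : orderTopologicalType d) (V : set X) x :
  open V -> open (order_component V x).
Proof.
rewrite !openE => oV z xz; have := oV z (order_component_sub xz).
rewrite /interior !itv_nbhsE => -[i [oi zi] iV]; exists i => // w wi.
apply: (order_component_trans xz) => t zwt; apply: iV.
exact: between_itv zi wi zwt.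
Qed.

Definition seals d (T : orderType d) (E V : set T) := forall i : interval T,
  [set` i] `&` E = set0 -> [set` i] `&` V !=set0 -> [set` i] `<=` V.

Lemma ccc_open_seal d (X : orderTopologicalType d) (V : set X) :
  ccc X -> open V ->
  exists E, [/\ countable E, E `<=` V, V !=set0 -> E !=set0 & seals E V].
Proof.
move=> hc oV; have hI := ccc_interval_ccc hc.
have /choice[lo lo_spec] := fun A : set X => interval_ccc_coinitial A hI.
have /choice[hi hi_spec] := fun A : set X => interval_ccc_cofinal A hI.
pose comps := order_component V @` V.
have comps_countable : countable comps.
  apply: ccc_trivIset => // [_ [x Vx <-]|_ _ [x Vx <-] [y Vy <-] [z [xz yz]]].
    split; first exact: open_order_component.
    by exists x; exact: order_component_refl.
  exact: order_component_eq xz yz.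
exists (\bigcup_(K in comps) (lo K `|` hi K)); split.
- apply: bigcup_countable comps_countable _ => K _.
  by have [? _ _] := lo_spec K; have [? _ _] := hi_spec K; exact: countable_setU.
- move=> e [_ [x Vx <-]]; have [_ lo_K _] := lo_spec (order_component V x).
  have [_ hi_K _] := hi_spec (order_component V x).
  by case=> [/lo_K|/hi_K]; exact: order_component_sub.
- move=> [x Vx]; have [_ _ lo_coinit] := lo_spec (order_component V x).
  have [c lo_c _] := lo_coinit x (order_component_refl Vx).
  by exists c, (order_component V x); [exists x|left].
- move=> i iE [x [ix Vx]] y iy; pose K := order_component V x.
  have notin_i c : (lo K `|` hi K) c -> ~ [set` i] c.
    move=> Kc ic; suff : ([set` i] `&` \bigcup_(K in comps) (lo K `|` hi K)) c.
      by rewrite iE.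
    by split=> //; exists K => //; exists x.
  have [_ lo_K lo_coinit] := lo_spec K; have [_ hi_K hi_cofin] := hi_spec K.
  have [le_yx|/ltW le_xy] := leP y x.
    have [c lo_c le_cx] := lo_coinit x (order_component_refl Vx).
    have [le_cy|/ltW le_yc] := leP c y.
      by apply: (lo_K c lo_c); rewrite /between le_cy le_yx orbT.
    exfalso; apply: (notin_i c (or_introl lo_c)).
    by apply: between_itv iy ix _; rewrite /between le_yc le_cx.
  have [c hi_c le_xc] := hi_cofin x (order_component_refl Vx).
  have [le_yc|/ltW le_cy] := leP y c.
    by apply: (hi_K c hi_c); rewrite /between le_xy le_yc.
  exfalso; apply: (notin_i c (or_intror hi_c)).
  by apply: between_itv ix iy _; rewrite /between le_xc le_cy.
Qed.

Section supersets.
Context {T : Type} (B : set (set T)).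

Definition supersets U := [set W | B W /\ U `<=` W].

Definition level U := #|` fset_set (supersets U)|%fset.

Lemma op_like_nat_finite_supersets U :
  op_like [set: nat] B -> B U -> finite_set (supersets U).
Proof. by move=> like BU; apply: contrapT => /infiniteP; exact: like. Qed.

Lemma level_eq_sub U V : B U -> finite_set (supersets U) -> U `<=` V ->
  level U = level V -> V `<=` U.
Proof.
move=> BU finU UV lvl_eq.
have sub : supersets V `<=` supersets U.
  by move=> W [BW VW]; split=> //; exact: subset_trans UV VW.
have finV := sub_finite_set sub finU.
have fsub : (fset_set (supersets V) `<=` fset_set (supersets U))%fset.
  by rewrite -fset_set_sub.
have [_] := fsubset_leqif_cards fsub; rewrite /level in lvl_eq.
rewrite lvl_eq eqxx => /esym/eqP same.
have : U \in fset_set (supersets U).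
  by rewrite in_fset_set //; apply/mem_set; split.
by rewrite -same in_fset_set // => /set_mem[].
Qed.

End supersets.

Lemma ccc_level_representatives (X : topologicalType) (B : set (set X)) : ccc X ->
  (forall U, B U -> open U /\ U !=set0) ->
  exists C, [/\ countable C, C `<=` B &
    forall U, B U -> exists2 V, C V & level B V = level B U /\ U `&` V !=set0].
Proof.
move=> hc B_open; pose layer n := [set U | B U /\ level B U = n].
pose D n := proj1_sig (ex_maximal_disjoint_subcollection id (layer n)).
have maxD n : maximal_disjoint_subcollection id (D n) (layer n).
  exact: proj2_sig (ex_maximal_disjoint_subcollection id (layer n)).
exists (\bigcup_(n in [set: nat]) D n); split.
- apply: bigcup_countable => // n _; have [D_layer tD _] := maxD n.
  by apply: ccc_trivIset tD => // U /D_layer[/B_open].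
- by move=> U [n _ DU]; have [/(_ U DU)[]] := maxD n.
- move=> U BU; have [V DV UV] := maximal_disjoint_meets (maxD (level B U))
    (conj BU erefl) (B_open U BU).2.
  have [/(_ V DV)[_ lvlV] _ _] := maxD (level B U).
  by exists V; [exists (level B U)|split].
Qed.

Lemma level_representatives_seals_dense d (X : orderTopologicalType d)
    (B C : set (set X)) (E : set X -> set X) :
  pi_base B -> (forall U, B U -> finite_set (supersets B U)) ->
  (forall U, B U -> exists2 V, C V & level B V = level B U /\ U `&` V !=set0) ->
  (forall V, C V -> [/\ E V `<=` V, E V !=set0 & seals (E V) V]) ->
  dense (\bigcup_(V in C) E V).
Proof.
move=> [_ B_pi] B_fin C_meets E_spec O [x Ox] oO; apply: contrapT => OE0.
have : nbhs x O by move: oO; rewrite openE; exact.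
rewrite itv_nbhsE => -[i [oi ix] iO].
have [U BU Ui] := B_pi _ (itv_open_ends_open oi) (ex_intro _ x ix).
have [V CV [lvl_VU [w [Uw Vw]]]] := C_meets U BU.
have [EV_V [e EVe] sealV] := E_spec V CV.
have iEV : [set` i] `&` E V = set0.
  apply/seteqP; split=> // y [iy EVy]; apply: OE0.
  by exists y; split; [exact: iO | exists V].
have iV : [set` i] `<=` V := sealV i iEV (ex_intro _ w (conj (Ui w Uw) Vw)).
have VU : V `<=` U :=
  level_eq_sub BU (B_fin U BU) (subset_trans Ui iV) (esym lvl_VU).
suff : ([set` i] `&` E V) e by rewrite iEV.
by split=> //; apply: Ui; apply: VU; exact: EV_V.
Qed.

Theorem theorem2p26 (d : Order.disp_t) (X : orderTopologicalType d) :
  suslin_line X -> piNt_ge_omega1 X.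
Proof.
move=> [hc not_separable] B [B_open B_pi] like.
have [C [C_countable CB C_meets]] := ccc_level_representatives hc B_open.
have /choice[E E_spec] : forall V, exists E : set X,
    C V -> [/\ countable E, E `<=` V, E !=set0 & seals E V].
  move=> V; have [CV|nCV] := pselect (C V); last by exists set0 => /nCV.
  have [oV V0] := B_open V (CB V CV).
  by have [E [? ? /(_ V0) ? ?]] := ccc_open_seal hc oV; exists E.
apply: not_separable; exists (\bigcup_(V in C) E V); split.
  by apply: bigcup_countable C_countable _ => V /E_spec[].
apply: (@level_representatives_seals_dense _ _ B) => // [U BU|V /E_spec[] //].
exact: op_like_nat_finite_supersets.
Qed.
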